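(* Let $U$ be an $n$-qubit unitary and $M^U$ the representation matrix of the channel $\rho\mapsto U\rho U^\dagger$. Then: (1) for $0<p<2$ and $0<q\le\infty$, $\|M^U\|_{p,q}\ge1$, with equality if and only if $U$ is a Clifford unitary; (2) for $p>2$ and $0<q<\infty$, $\|M^U\|_{p,q}\le1$, with equality if and only if $U$ is a Clifford unitary; (3) for $p=2$ and any $q>0$ (including $q=\infty$), and for $p>2$ and $q=\infty$, $\|M^U\|_{p,q}=1$.
   Context: Pauli notation: $P_{\vec z}=P_{z_1}\otimes\cdots\otimes P_{z_n}$ for $\vec z\in\{0,1,2,3\}^n$, $P_0=\mathbb I,P_1=X,P_2=Y,P_3=Z$. Representation matrix: $M^\Phi_{\vec z\vec x}=2^{-n}\mathrm{Tr}(P_{\vec z}\Phi(P_{\vec x}))$. A Clifford unitary is a unitary $U$ such that $UP_{\vec x}U^\dagger$ is, up to a phase, a Pauli operator for every $\vec x$. Group norm: $\|M\|_{p,q}=(\frac1{N_1}\sum_i\|M_i\|_p^q)^{1/q}$ for an $N_1\times N_2$ matrix with rows $M_i$ ($\max_i\|M_i\|_p$ if $q=\infty$); $\|\cdot\|_p$ for $0<p<1$ is the usual $(\sum|\cdot|^p)^{1/p}$ quasi-norm. *)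

From mathcomp Require Import all_boot all_order all_algebra.
From mathcomp Require Import reals constructive_ereal exp complex.
Set Implicit Arguments. Unset Strict Implicit. Unset Printing Implicit Defensive.
Import Order.TTheory GRing.Theory Num.Theory.
Local Open Scope ring_scope.

Section Pauli.
Variable R : realType.
Local Notation C := (R[i]).

(* single-qubit Pauli matrices P_0 = I, P_1 = X, P_2 = Y, P_3 = Z;
   entry (a, b) with a, b : bool the row / column basis state *)
Definition pauli1 (s : 'I_4) (a b : bool) : C :=
  match val s with
  | 0 => if a == b then 1 else 0
  | 1 => if a == b then 0 else 1
  | 2 => if a == b then 0 else if a then 'i%C else - 'i%C
  | _ => if a == b then (if a then -1 else 1) else 0
  end.

Definition qbit (k i : nat) : bool := odd (i %/ 2 ^ k).

(* Pauli string P_z = P_{z_1} (x) ... (x) P_{z_n}, written entrywise: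
   the Kronecker product has entries prod_k (P_{z_k})_{a_k b_k}. *)
Definition pauli (n : nat) (z : {ffun 'I_n -> 'I_4}) : 'M[C]_(2 ^ n) :=
  \matrix_(a, b) \prod_(k < n) pauli1 (z k) (qbit k a) (qbit k b).

Definition adj (m : nat) (A : 'M[C]_m) : 'M[C]_m := (map_mx Num.conj A)^T.

Definition unitary (m : nat) (U : 'M[C]_m) : Prop := U *m adj U = 1%:M.

Definition clifford (n : nat) (U : 'M[C]_(2 ^ n)) : Prop :=
  forall x : {ffun 'I_n -> 'I_4}, exists (c : C) (y : {ffun 'I_n -> 'I_4}),
    `|c| = 1 /\ U *m pauli x *m adj U = c *: pauli y.

Definition repr_mat (n : nat) (U : 'M[C]_(2 ^ n))
  (z x : {ffun 'I_n -> 'I_4}) : C :=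
  (2 ^ n)%:R^-1 * \tr (pauli z *m (U *m pauli x *m adj U)).

Definition cabs (c : C) : R := complex.Re `|c|.

Definition groupnorm (n : nat) (p : R) (q : \bar R)
  (M : {ffun 'I_n -> 'I_4} -> {ffun 'I_n -> 'I_4} -> C) : R :=
  match q with
  | +oo%E => \big[Num.max/0]_(z : {ffun 'I_n -> 'I_4})
               (\sum_(x : {ffun 'I_n -> 'I_4}) cabs (M z x) `^ p) `^ p^-1
  | (q'%:E)%E => ((4 ^ n)%:R^-1 * \sum_(z : {ffun 'I_n -> 'I_4})
               ((\sum_(x : {ffun 'I_n -> 'I_4}) cabs (M z x) `^ p) `^ p^-1) `^ q')
               `^ q'^-1
  | -oo%E => 0
  end.

End Pauli.

From mathcomp Require Import all_boot all_order all_algebra.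
From mathcomp Require Import reals constructive_ereal exp complex.
From mathcomp Require Import zify ring lra.
Set Implicit Arguments. Unset Strict Implicit. Unset Printing Implicit Defensive.
Import Order.TTheory GRing.Theory Num.Theory.
Local Open Scope ring_scope.

(* The proof rests on two facts about the matrix |M| of entrywise moduli:
   - every row of |M| is a unit vector, sum_x |M_zx|^2 = 1 (orthogonality and
     completeness of the Pauli strings, plus unitarity of U and of U^dagger),
     and the row of P_0 = 1 has entries 0 and 1;
   - U is Clifford iff every entry of |M| is 0 or 1.
   For a unit vector r with entries in [0, 1], r_i^p >= r_i^2 when p <= 2 and
   r_i^p <= r_i^2 when p >= 2, with equality iff r_i is 0 or 1 (p != 2).  Hence
   each row l^p norm is >= 1 (p < 2), <= 1 (p > 2) or = 1 (p = 2), and equals 1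
   for all rows iff U is Clifford.  The group norm is a power mean (q finite)
   or a maximum (q = oo) of these row norms, which preserves these bounds and
   their equality cases; for p > 2 and q = oo the identity row attains 1.
   The file develops, in order: the real inequalities (unit vectors, means,
   maxima), binary digits, the Pauli algebra, the representation matrix, and
   finally the group norm and the theorem. *)

Section PowerInequalities.
Variable R : realType.
Implicit Types r p e S : R.

Lemma unit_powR_antitone r p p' : 0 <= r <= 1 -> 0 < p -> p <= p' -> r `^ p' <= r `^ p.
Proof.
move=> /andP[r0 r1] p0 pp'.
have [->|rn0] := eqVneq r 0; first by rewrite !powR0 ?gt_eqF ?(lt_le_trans p0).
by apply: ger_powR => //; rewrite lt_neqAle eq_sym rn0 r0 r1.
Qed.

Lemma powR2 r : 0 <= r -> r `^ 2 = r ^+ 2.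
Proof. exact: powR_mulrn. Qed.

Lemma powR_eq_sqr r p : 0 <= r -> p != 2 -> r `^ p = r ^+ 2 -> r = 0 \/ r = 1.
Proof.
move=> r0 p2; rewrite -powR2 //.
have [->|rn0] := eqVneq r 0; first by left.
rewrite /powR (negbTE rn0) => /expR_inj /eqP.
rewrite -subr_eq0 -mulrBl mulf_eq0 subr_eq0 (negbTE p2) /= ln_eq0; last first.
  by rewrite lt_neqAle eq_sym rn0.
by move=> /eqP; right.
Qed.

Lemma powR_ge1 S e : 0 < e -> 1 <= S -> 1 <= S `^ e.
Proof.
move=> e0 S1; suff : 1 `^ e <= S `^ e by rewrite powR1.
by apply: ge0_ler_powR; rewrite ?nnegrE ?(ltW e0) //; lra.
Qed.

Lemma powR_le1 S e : 0 < e -> 0 <= S -> S <= 1 -> S `^ e <= 1.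
Proof.
move=> e0 S0 S1; suff : S `^ e <= 1 `^ e by rewrite powR1.
by apply: ge0_ler_powR; rewrite ?nnegrE ?(ltW e0) //; lra.
Qed.

Lemma powR_eq1_iff S e : 0 < e -> 0 <= S -> (S `^ e = 1 <-> S = 1).
Proof.
move=> e0 S0; split => [|->]; last by rewrite powR1.
by move/eqP; rewrite powR_eq1 => /or3P [/eqP // | | ]; [lra | move=> /eqP; lra].
Qed.
End PowerInequalities.

(* Entrywise moduli r of a unit vector (sum_i r_i^2 = 1) lie in [0, 1], so
   comparing r_i^p with r_i^2 gives: the l^p norm of r is >= 1 for p <= 2 and
   <= 1 for p >= 2, with equality for p != 2 exactly when every r_i is 0 or 1. *)
Section UnitVectors.
Variables (R : realType) (I : finType).

Definition zero_one (r : I -> R) : Prop := forall i, r i = 0 \/ r i = 1.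

Definition lp_norm (p : R) (r : I -> R) : R := (\sum_i r i `^ p) `^ p^-1.

Variable r : I -> R.
Hypothesis r_ge0 : forall i, 0 <= r i.
Hypothesis r_unit : \sum_i r i ^+ 2 = 1.

Lemma unit_entry_bound (i : I) : 0 <= r i <= 1.
Proof.
rewrite r_ge0 -(expr_le1 (n:=2)) // -r_unit (bigD1 i) //= lerDl.
by apply: sumr_ge0 => j _; rewrite exprn_ge0.
Qed.

Lemma sum_powR_ge1 (p : R) : 0 < p -> p <= 2 -> 1 <= \sum_i r i `^ p.
Proof.
move=> p0 p2; rewrite -r_unit; apply: ler_sum => i _.
by rewrite -powR2 // unit_powR_antitone // unit_entry_bound.
Qed.

Lemma sum_powR_le1 (p : R) : 0 < p -> 2 <= p -> \sum_i r i `^ p <= 1.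
Proof.
move=> p0 p2; rewrite -r_unit; apply: ler_sum => i _.
by rewrite -powR2 // unit_powR_antitone // unit_entry_bound.
Qed.

Lemma sum_powR_eq1 (p : R) : 0 < p -> p != 2 -> \sum_i r i `^ p = 1 <-> zero_one r.
Proof.
move=> p0 p2; split => [E i|Z]; last first.
  rewrite -r_unit; apply: eq_bigr => i _.
  by case: (Z i) => ->; rewrite ?powR0 ?gt_eqF // ?expr0n ?powR1 ?expr1n.
apply: (powR_eq_sqr (p := p)) => //.
have [pl|pg] := ltP p 2.
  have sum0 : \sum_j (r j `^ p - r j ^+ 2) = 0 by rewrite sumrB E r_unit subrr.
  apply/eqP; rewrite -subr_eq0; apply/eqP; apply: (psumr_eq0P _ sum0) => // j _.
  by rewrite subr_ge0 -powR2 // unit_powR_antitone ?unit_entry_bound ?ltW.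
have sum0 : \sum_j (r j ^+ 2 - r j `^ p) = 0 by rewrite sumrB E r_unit subrr.
apply/eqP; rewrite eq_sym -subr_eq0; apply/eqP; apply: (psumr_eq0P _ sum0) => // j _.
by rewrite subr_ge0 -powR2 // unit_powR_antitone ?unit_entry_bound.
Qed.

Lemma lp_norm_ge1 (p : R) : 0 < p -> p <= 2 -> 1 <= lp_norm p r.
Proof. by move=> p0 p2; rewrite powR_ge1 ?invr_gt0 ?sum_powR_ge1. Qed.

Lemma lp_norm_le1 (p : R) : 0 < p -> 2 <= p -> lp_norm p r <= 1.
Proof.
move=> p0 p2; rewrite powR_le1 ?invr_gt0 ?sum_powR_le1 //.
by apply: sumr_ge0 => i _; apply: powR_ge0.
Qed.

Lemma lp_norm_eq1 (p : R) : 0 < p -> p != 2 -> lp_norm p r = 1 <-> zero_one r.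
Proof.
move=> p0 p2; rewrite -(sum_powR_eq1 p0 p2) /lp_norm.
by apply: powR_eq1_iff; rewrite ?invr_gt0 // sumr_ge0 // => i _; apply: powR_ge0.
Qed.

Lemma zero_one_basis : zero_one r -> exists y, r y = 1 /\ forall z, z != y -> r z = 0.
Proof.
move=> Z; have [y ry1] : exists y, r y = 1.
  case: (pickP (fun i => r i == 1)) => [y /eqP ry1|none]; first by exists y.
  have zero i : r i ^+ 2 = 0.
    by have [->|ri1] := Z i; [rewrite expr0n | have := none i; rewrite ri1 eqxx].
  by move: r_unit; rewrite big1 => [/eqP|i _]; [rewrite eq_sym oner_eq0 | exact: zero].
exists y; split => // z zy; have [//|rz1] := Z z.
have : 1 + 1 <= \sum_i r i ^+ 2 :> R.
  rewrite (bigD1 y) //= (bigD1 z) //= ry1 rz1 !expr1n addrA lerDl.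
  by rewrite sumr_ge0 // => i _; rewrite sqr_ge0.
by rewrite r_unit; lra.
Qed.

Lemma lp_norm2 : lp_norm 2 r = 1.
Proof. by apply/le_anti; rewrite lp_norm_le1 ?lp_norm_ge1. Qed.
End UnitVectors.

Section Means.
Variables (R : realType) (I : finType).
Hypothesis I_nonempty : (0 < #|I|)%N.

Definition mean (f : I -> R) : R := #|I|%:R^-1 * \sum_i f i.

Definition power_mean (q : R) (f : I -> R) : R := mean (fun i => f i `^ q) `^ q^-1.

Lemma mean_ge (b : R) (f : I -> R) : (forall i, b <= f i) ->
  b <= mean f /\ (mean f = b <-> forall i, f i = b).
Proof.
move=> bf; have card_neq0 : (#|I|%:R : R) != 0 by rewrite pnatr_eq0 -lt0n.
have meanE : mean f = #|I|%:R^-1 * \sum_i (f i - b) + b.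
  by rewrite /mean sumrB sumr_const -[b *+ _]mulr_natl mulrBr mulKf ?subrK.
have excess_ge0 : 0 <= \sum_i (f i - b) by apply: sumr_ge0 => i _; rewrite subr_ge0.
rewrite meanE lerDr mulr_ge0 ?invr_ge0 ?ler0n //; split=> //.
split => [|fb]; last by rewrite big1 ?mulr0 ?add0r // => i _; rewrite fb subrr.
move/(canRL (addrK b)); rewrite subrr => /eqP.
rewrite mulf_eq0 invr_eq0 (negbTE card_neq0) /=.
move=> /eqP /psumr_eq0P excess0 i; apply/eqP; rewrite -subr_eq0; apply/eqP.
by apply: excess0 => // j _; rewrite subr_ge0.
Qed.

Lemma mean_le (b : R) (f : I -> R) : (forall i, f i <= b) ->
  mean f <= b /\ (mean f = b <-> forall i, f i = b).
Proof.
move=> fb; have meanN : mean (fun i => - f i) = - mean f by rewrite /mean sumrN mulrN.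
have Nfb i : - b <= - f i by rewrite lerN2.
have [bound equal] := mean_ge Nfb.
rewrite meanN lerN2 in bound; rewrite meanN in equal.
split => //; split => [E i|F].
  by apply: oppr_inj; apply: (proj1 equal); rewrite E.
by apply: oppr_inj; apply: (proj2 equal) => i; rewrite F.
Qed.

Lemma power_mean_ge1 (q : R) (f : I -> R) : 0 < q -> (forall i, 1 <= f i) ->
  1 <= power_mean q f /\ (power_mean q f = 1 <-> forall i, f i = 1).
Proof.
move=> q0 f1; have [bound equal] := mean_ge (fun i => powR_ge1 q0 (f1 i)).
have f0 i : 0 <= f i by apply: le_trans (f1 i).
rewrite /power_mean (powR_eq1_iff _ (le_trans ler01 bound)) ?invr_gt0 // equal.
split; first by rewrite powR_ge1 ?invr_gt0.
by split => E i; [apply/(powR_eq1_iff q0 (f0 i)) | rewrite E powR1].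
Qed.

Lemma power_mean_le1 (q : R) (f : I -> R) : 0 < q -> (forall i, 0 <= f i <= 1) ->
  power_mean q f <= 1 /\ (power_mean q f = 1 <-> forall i, f i = 1).
Proof.
move=> q0 f01; have f0 i : 0 <= f i by case/andP: (f01 i).
have [bound equal] := mean_le (fun i => powR_le1 q0 (f0 i) (proj2 (andP (f01 i)))).
have mean0 : 0 <= mean (fun i => f i `^ q).
  by rewrite mulr_ge0 ?invr_ge0 ?ler0n // sumr_ge0 // => i _; apply: powR_ge0.
rewrite /power_mean (powR_eq1_iff _ mean0) ?invr_gt0 // equal.
split; first by rewrite powR_le1 ?invr_gt0.
by split => E i; [apply/(powR_eq1_iff q0 (f0 i)) | rewrite E powR1].
Qed.
End Means.

Section Maxima.
Variables (R : realType) (I : finType).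

Lemma bigmax_ge1 (f : I -> R) (i0 : I) : (forall i, 1 <= f i) ->
  1 <= \big[Num.max/0]_i f i /\ (\big[Num.max/0]_i f i = 1 <-> forall i, f i = 1).
Proof.
move=> f1; have ge1 : 1 <= \big[Num.max/0]_i f i.
  exact: le_trans (f1 i0) (le_bigmax _ _ _).
split => //; split => [E i|E].
  by apply/le_anti; rewrite f1 andbT -E le_bigmax.
by apply/le_anti; rewrite ge1 andbT; apply: bigmax_le => // i _; rewrite E.
Qed.

Lemma bigmax_attained1 (f : I -> R) (i0 : I) : (forall i, f i <= 1) -> f i0 = 1 ->
  \big[Num.max/0]_i f i = 1.
Proof.
move=> f1 fi0; apply/le_anti/andP; split; last by rewrite -fi0 le_bigmax.
by apply: bigmax_le => // i _; apply: f1.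
Qed.
End Maxima.

Lemma qbit0 (m : nat) : qbit 0 m = odd m.
Proof. by rewrite /qbit expn0 divn1. Qed.

Lemma qbitS (k m : nat) : qbit k.+1 m = qbit k m./2.
Proof. by rewrite /qbit expnS divnMA divn2. Qed.

Lemma qbit_inj (n a b : nat) : (a < 2 ^ n)%N -> (b < 2 ^ n)%N ->
  (forall k, (k < n)%N -> qbit k a = qbit k b) -> a = b.
Proof.
elim: n a b => [|n IH] a b; first by rewrite expn0 !ltnS !leqn0 => /eqP -> /eqP ->.
move=> Ha Hb H.
have odd_ab := H 0%N (ltn0Sn _); rewrite !qbit0 in odd_ab.
have half_ab : a./2 = b./2.
  apply: IH => [||k Hk]; try by rewrite -divn2 ltn_divLR // mulnC -expnS.
  by rewrite -!qbitS; apply: H.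
by rewrite -[a]odd_double_half -[b]odd_double_half odd_ab half_ab.
Qed.

Lemma sum_even_odd (V : nmodType) (m : nat) (h : nat -> V) :
  \sum_(i < (2 * m)%N) h i = \sum_(i < m) (h i.*2 + h i.*2.+1).
Proof.
elim: m => [|m IH]; first by rewrite muln0 !big_ord0.
rewrite mulnS !big_ord_recr /= IH addrA.
by congr (_ + _ + _); f_equal; lia.
Qed.

Lemma sum_bits (C : comPzSemiRingType) (n : nat) (f : 'I_n -> bool -> C) :
  \sum_(a < 2 ^ n) \prod_(k < n) f k (qbit k a)
  = \prod_(k < n) (f k false + f k true).
Proof.
elim: n f => [|n IH] f; first by rewrite expn0 big_ord1 !big_ord0.
rewrite expnS (sum_even_odd _ (fun a => \prod_(k < n.+1) f k (qbit k a))).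
rewrite big_ord_recl -(IH (fun k => f (lift ord0 k))) mulr_sumr.
apply: eq_bigr => a _; rewrite mulrDl !big_ord_recl !qbit0 /= odd_double /=.
congr (_ * _ + _ * _); apply: eq_bigr => k _.
all: by rewrite /bump /= add1n qbitS /= ?doubleK ?uphalf_double.
Qed.

Lemma forall_qbit (n : nat) (a b : 'I_(2 ^ n)) :
  [forall k : 'I_n, qbit k a == qbit k b] = (a == b).
Proof.
apply/forallP/eqP => [H|-> //]; apply/val_inj.
by apply: (qbit_inj (ltn_ord a) (ltn_ord b)) => k Hk; apply/eqP: (H (Ordinal Hk)).
Qed.

Lemma prod_if (C : comPzSemiRingType) (I : finType) (x : C) (P : pred I) :
  \prod_k (if P k then x else 0) = if [forall k, P k] then x ^+ #|I| else 0.
Proof.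
case: (boolP [forall k, P k]) => [/forallP H | /forallPn [k Hk]].
  by rewrite (eq_bigr (fun _ => x)) ?prodr_const // => k _; rewrite H.
by rewrite (bigD1 k) //= (negbTE Hk) mul0r.
Qed.

Lemma forall_andb (I : finType) (P Q : pred I) :
  [forall k, P k && Q k] = [forall k, P k] && [forall k, Q k].
Proof.
apply/forallP/andP => [H|[/forallP H1 /forallP H2] k]; last by rewrite H1 H2.
by split; apply/forallP => k; case/andP: (H k).
Qed.

Section PauliAlgebra.
Variable R : realType.
Local Notation C := (R[i]).
Local Notation pauli1 := (pauli1 R).

Lemma i_mul_i : 'i%C * 'i%C = -1 :> C.
Proof. by rewrite -expr2 sqr_i. Qed.

Lemma pauli1_complete (a b c d : bool) :
  \sum_(s < 4) pauli1 s c d * pauli1 s a b = if (c == b) && (d == a) then 2 else 0.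
Proof.
rewrite !big_ord_recl big_ord0 /pauli1 /=.
case: a; case: b; case: c; case: d => /=.
all: by rewrite ?mulr0 ?mul0r ?mulr1 ?mul1r ?mulrN ?mulNr ?opprK ?i_mul_i; ring.
Qed.

(* Orthogonality: Tr (P_s P_t) = 2 delta_{st}, with the trace written out. *)
Lemma pauli1_orth (s t : 'I_4) :
  (pauli1 s false false * pauli1 t false false + pauli1 s false true * pauli1 t true false) +
  (pauli1 s true false * pauli1 t false true + pauli1 s true true * pauli1 t true true)
  = if s == t then 2 else 0.
Proof.
case: s => [[|[|[|[|s]]]] Hs] //; case: t => [[|[|[|[|t]]]] Ht] //; rewrite /pauli1 /=.
all: by rewrite ?mulr0 ?mul0r ?mulr1 ?mul1r ?mulrN ?mulNr ?opprK ?i_mul_i; ring.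
Qed.

Lemma pauli1_herm (s : 'I_4) (a b : bool) : Num.conj (pauli1 s b a) = pauli1 s a b.
Proof.
case: s => [[|[|[|[|s]]]] Hs] //; case: a; case: b; rewrite /pauli1 /=.
all: rewrite ?conjC0 ?conjC1 ?rmorphN ?opprK //.
all: by apply/eqP; rewrite eq_complex /= ?oppr0 ?opprK ?eqxx.
Qed.
End PauliAlgebra.

Section PauliStrings.
Variable R : realType.
Local Notation C := (R[i]).
Variable n : nat.
Local Notation T := {ffun 'I_n -> 'I_4}.

Definition pauli_id : T := [ffun => ord0].

Lemma pauli_idE : pauli R pauli_id = 1%:M.
Proof.
apply/matrixP => a b; rewrite !mxE.
under eq_bigr do rewrite ffunE /pauli1 /=.
by rewrite prod_if forall_qbit expr1n; case: (a == b).
Qed.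

Lemma pauli_herm (z : T) : adj (pauli R z) = pauli R z.
Proof.
apply/matrixP => a b; rewrite !mxE rmorph_prod; apply: eq_bigr => k _.
exact: pauli1_herm.
Qed.

Lemma ffun_eqE (z y : T) : [forall k, z k == y k] = (z == y).
Proof. by apply/forallP/eqP => [H|-> //]; apply/ffunP => k; apply/eqP. Qed.

Lemma pauli_trace_orth (z y : T) :
  \tr (pauli R z *m pauli R y) = if z == y then (2 ^ n)%:R else 0.
Proof.
rewrite /mxtrace.
transitivity (\sum_(i < 2 ^ n) \sum_(j < 2 ^ n) \prod_(k < n)
  (pauli1 R (z k) (qbit k i) (qbit k j) * pauli1 R (y k) (qbit k j) (qbit k i))).
  by apply: eq_bigr => i _; rewrite !mxE; apply: eq_bigr => j _; rewrite !mxE -big_split.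
under eq_bigr => i _ do rewrite (sum_bits (fun k b =>
  pauli1 R (z k) (qbit k i) b * pauli1 R (y k) b (qbit k i))).
rewrite (sum_bits (fun k a => pauli1 R (z k) a false * pauli1 R (y k) false a
   + pauli1 R (z k) a true * pauli1 R (y k) true a)).
under eq_bigr do rewrite pauli1_orth.
by rewrite prod_if card_ord ffun_eqE natrX.
Qed.

Lemma pauli_complete (a b c d : 'I_(2 ^ n)) :
  \sum_(z : T) pauli R z c d * pauli R z a b =
  if (c == b) && (d == a) then (2 ^ n)%:R else 0.
Proof.
transitivity (\prod_(k < n) \sum_(s < 4)
   (pauli1 R s (qbit k c) (qbit k d) * pauli1 R s (qbit k a) (qbit k b))).
  rewrite bigA_distr_bigA; apply: eq_bigr => z _.
  by rewrite !mxE -big_split.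
under eq_bigr do rewrite pauli1_complete.
by rewrite prod_if card_ord forall_andb !forall_qbit natrX.
Qed.

Lemma two_pow_neq0 : (2 ^ n)%:R != 0 :> C.
Proof. by rewrite pnatr_eq0 expn_eq0. Qed.

Lemma pauli_expansion (A : 'M[C]_(2 ^ n)) :
  A = \sum_(z : T) ((2 ^ n)%:R^-1 * \tr (pauli R z *m A)) *: pauli R z.
Proof.
apply/matrixP => a b; rewrite summxE.
under eq_bigr do rewrite mxE.
transitivity ((2 ^ n)%:R^-1 * \sum_(c < 2 ^ n) \sum_(d < 2 ^ n)
   (A d c * \sum_(z : T) pauli R z c d * pauli R z a b)); last first.
  symmetry; under eq_bigr do rewrite -mulrA.
  rewrite -mulr_sumr; congr (_ * _).
  under eq_bigr do rewrite /mxtrace mulr_suml.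
  rewrite exchange_big; apply: eq_bigr => c _.
  under eq_bigr do rewrite mxE mulr_suml.
  rewrite exchange_big; apply: eq_bigr => d _.
  by rewrite mulr_sumr; apply: eq_bigr => z _; rewrite mulrA [A d c * _]mulrC.
under eq_bigr do under eq_bigr do rewrite pauli_complete.
rewrite (bigD1 b) //= (bigD1 a) //= !eqxx /=.
rewrite [X in _ + X + _]big1; last by move=> d /negbTE ->; rewrite mulr0.
rewrite [X in _ + X]big1; last first.
  by move=> c /negbTE Hc; rewrite big1 // => d _; rewrite Hc mulr0.
by rewrite !addr0 mulrC mulfK // two_pow_neq0.
Qed.
End PauliStrings.

Section Adjoint.
Variables (R : realType) (m : nat).
Local Notation C := (R[i]).

Lemma adjK (A : 'M[C]_m) : adj (adj A) = A.
Proof. by apply/matrixP => i j; rewrite !mxE conjCK. Qed.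

Lemma adjM (A B : 'M[C]_m) : adj (A *m B) = adj B *m adj A.
Proof.
apply/matrixP => i j; rewrite !mxE rmorph_sum; apply: eq_bigr => k _.
by rewrite !mxE rmorphM mulrC.
Qed.

Lemma adj_sumZ (I : finType) (c : I -> C) (A : I -> 'M[C]_m) :
  adj (\sum_i c i *: A i) = \sum_i Num.conj (c i) *: adj (A i).
Proof.
apply/matrixP => i j; rewrite !mxE !summxE rmorph_sum; apply: eq_bigr => k _.
by rewrite !mxE rmorphM.
Qed.

Lemma unitary_adj (U : 'M[C]_m) : unitary U -> unitary (adj U).
Proof. by move=> HU; rewrite /unitary adjK; apply: mulmx1C. Qed.
End Adjoint.

Section Modulus.
Variable R : realType.
Local Notation C := (R[i]).
Local Open Scope complex_scope.

Lemma cabsE (c : C) : `|c| = (cabs c)%:C.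
Proof. by rewrite /cabs normc_def. Qed.

Lemma cabs_ge0 (c : C) : 0 <= cabs c.
Proof. by have := normr_ge0 c; rewrite cabsE lecE => /andP[_]. Qed.

Lemma cabs_sqr (c : C) : ((cabs c) ^+ 2)%:C = c * Num.conj c.
Proof. by rewrite -sqr_normc cabsE rmorphXn. Qed.

Lemma cabs_eq0 (c : C) : cabs c = 0 <-> c = 0.
Proof.
split => [c0|->]; last by rewrite /cabs normr0.
by apply/eqP; rewrite -normr_eq0 cabsE c0.
Qed.

Lemma cabs_eq1 (c : C) : cabs c = 1 <-> `|c| = 1.
Proof. by rewrite cabsE; split => [->|[]]. Qed.
End Modulus.

(* Writing U P_x U^dagger = sum_z M_{zx} P_z (Pauli expansion) and comparing
   Tr (B B^dagger) = 2^n for B = U P_x U^dagger shows that every column of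
   |M^U| is a unit vector; since M^U_{zx} = M^{U^dagger}_{xz}, so is every row. *)
Section ReprMatrix.
Variables (R : realType) (n : nat).
Local Notation C := (R[i]).
Local Notation T := {ffun 'I_n -> 'I_4}.

Definition abs_row (U : 'M[C]_(2 ^ n)) (z : T) : T -> R := fun x => cabs (repr_mat U z x).

Lemma abs_row_ge0 (U : 'M[C]_(2 ^ n)) (z x : T) : 0 <= abs_row U z x.
Proof. exact: cabs_ge0. Qed.

Lemma repr_col_unit (U : 'M[C]_(2 ^ n)) (x : T) : unitary U ->
  \sum_(z : T) cabs (repr_mat U z x) ^+ 2 = 1.
Proof.
move=> HU; have HU' : adj U *m U = 1%:M by apply: mulmx1C.
set B := U *m pauli R x *m adj U.
have trace_unitary : \tr (B *m adj B) = (2 ^ n)%:R.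
  rewrite /B !adjM adjK pauli_herm !mulmxA mxtrace_mulC !mulmxA HU' mul1mx.
  by rewrite -[pauli R x *m adj U *m U]mulmxA HU' mulmx1 pauli_trace_orth eqxx.
have trace_expansion : \tr (B *m adj B) =
    (2 ^ n)%:R * \sum_(z : T) repr_mat U z x * Num.conj (repr_mat U z x).
  rewrite [in LHS](pauli_expansion B) adj_sumZ mulmx_suml raddf_sum mulr_sumr.
  apply: eq_bigr => z _; rewrite mulmx_sumr raddf_sum (bigD1 z) //= big1 => [|w wz].
    rewrite pauli_herm -scalemxAl -scalemxAr !mxtraceZ pauli_trace_orth eqxx addr0.
    by rewrite mulrA mulrC.
  rewrite pauli_herm -scalemxAl -scalemxAr !mxtraceZ pauli_trace_orth.
  by rewrite eq_sym (negbTE wz) !mulr0.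
apply: complexI; rewrite rmorph_sum /=; under eq_bigr do rewrite cabs_sqr.
by apply: (mulfI (two_pow_neq0 R n)); rewrite -trace_expansion trace_unitary mulr1.
Qed.

Lemma repr_mat_adj (U : 'M[C]_(2 ^ n)) (z x : T) : repr_mat U z x = repr_mat (adj U) x z.
Proof.
rewrite /repr_mat adjK; congr (_ * _).
by rewrite !mulmxA mxtrace_mulC !mulmxA mxtrace_mulC !mulmxA mxtrace_mulC !mulmxA.
Qed.

Lemma abs_row_unit (U : 'M[C]_(2 ^ n)) (z : T) : unitary U ->
  \sum_x abs_row U z x ^+ 2 = 1.
Proof.
move=> HU; rewrite /abs_row; under eq_bigr do rewrite repr_mat_adj.
exact/repr_col_unit/unitary_adj.
Qed.

Lemma abs_row_id (U : 'M[C]_(2 ^ n)) : unitary U -> zero_one (abs_row U (pauli_id n)).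
Proof.
move=> HU x; have HU' : adj U *m U = 1%:M by apply: mulmx1C.
rewrite /abs_row /repr_mat pauli_idE mul1mx mxtrace_mulC mulmxA HU' mul1mx.
rewrite -[pauli R x]mul1mx -pauli_idE pauli_trace_orth.
case: eqP => _; last by left; rewrite mulr0; apply/cabs_eq0.
by right; rewrite mulVf ?two_pow_neq0 //; apply/cabs_eq1; rewrite normr1.
Qed.

(* Clifford unitaries are exactly those whose |M^U| has 0/1 entries:
   U P_x U^dagger = c P_y makes column x equal c e_y, and conversely a unit
   column with 0/1 moduli is a phase times a basis vector. *)
Lemma clifford_zero_one (U : 'M[C]_(2 ^ n)) : unitary U ->
  clifford U <-> forall z, zero_one (abs_row U z).
Proof.
move=> HU; split => [HC z x | Z x].
  have [c [y [c1 E]]] := HC x; rewrite /abs_row /repr_mat E -scalemxAr mxtraceZ.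
  rewrite pauli_trace_orth; case: eqP => _; last by left; rewrite !mulr0; apply/cabs_eq0.
  by right; rewrite mulrCA mulVf ?two_pow_neq0 // mulr1; apply/cabs_eq1.
have col_zero_one : zero_one (fun z => cabs (repr_mat U z x)) by move=> z; apply: Z.
have [y [y1 y_only]] := zero_one_basis (repr_col_unit x HU) col_zero_one.
exists (repr_mat U y x), y; split; first exact/cabs_eq1.
rewrite {1}(pauli_expansion (U *m pauli R x *m adj U)) (bigD1 y) //= big1 ?addr0 //.
by move=> z zy; rewrite -/(repr_mat U z x) (proj1 (cabs_eq0 _) (y_only z zy)) scale0r.
Qed.
End ReprMatrix.

Section GroupNorm.
Variables (R : realType) (n : nat) (U : 'M[R[i]]_(2 ^ n)).
Hypothesis U_unitary : unitary U.
Local Notation T := {ffun 'I_n -> 'I_4}.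

Definition row_norm (p : R) (z : T) : R := lp_norm p (abs_row U z).

Lemma groupnorm_finE (p q : R) : groupnorm p q%:E (repr_mat U) = power_mean q (row_norm p).
Proof. by rewrite /groupnorm /power_mean /mean card_ffun !card_ord. Qed.

Lemma groupnorm_inftyE (p : R) :
  groupnorm p +oo%E (repr_mat U) = \big[Num.max/0]_z row_norm p z.
Proof. by []. Qed.

Lemma paulis_nonempty : (0 < #|T|)%N.
Proof. by rewrite card_ffun !card_ord expn_gt0. Qed.

Lemma row_norm_ge1 (p : R) (z : T) : 0 < p -> p <= 2 -> 1 <= row_norm p z.
Proof. exact: lp_norm_ge1 (abs_row_ge0 U z) (abs_row_unit z U_unitary) p. Qed.

Lemma row_norm_le1 (p : R) (z : T) : 0 < p -> 2 <= p -> 0 <= row_norm p z <= 1.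
Proof.
move=> p0 p2; rewrite powR_ge0 /=.
exact: lp_norm_le1 (abs_row_ge0 U z) (abs_row_unit z U_unitary) p p0 p2.
Qed.

Lemma row_norm2 (z : T) : row_norm 2 z = 1.
Proof. exact: lp_norm2 (abs_row_ge0 U z) (abs_row_unit z U_unitary). Qed.

Lemma row_norms_eq1 (p : R) : 0 < p -> p != 2 ->
  (forall z, row_norm p z = 1) <-> clifford U.
Proof.
move=> p0 p2; rewrite clifford_zero_one //.
have row_eq1 z := lp_norm_eq1 (abs_row_ge0 U z) (abs_row_unit z U_unitary) p0 p2.
by split => E z; apply/(row_eq1 z); apply: E.
Qed.

Lemma row_norm_id (p : R) : 0 < p -> p != 2 -> row_norm p (pauli_id n) = 1.
Proof.
move=> p0 p2; apply/(lp_norm_eq1 (abs_row_ge0 U _) _ p0 p2).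
  exact: abs_row_unit.
exact: abs_row_id.
Qed.
End GroupNorm.

Theorem mainTheorem11 (R : realType) (n : nat) (U : 'M[R[i]]_(2 ^ n)) :
  unitary U ->
  (* (1) 0 < p < 2, 0 < q <= oo *)
  (forall (p : R) (q : \bar R), 0 < p < 2 -> (0 < q)%E ->
     1 <= groupnorm p q (repr_mat U) /\ (groupnorm p q (repr_mat U) = 1 <-> clifford U)) /\
  (* (2) p > 2, 0 < q < oo *)
  (forall (p q : R), 2 < p -> 0 < q ->
     groupnorm p q%:E (repr_mat U) <= 1 /\ (groupnorm p q%:E (repr_mat U) = 1 <-> clifford U)) /\
  (* (3a) p = 2, 0 < q <= oo *)
  (forall q : \bar R, (0 < q)%E -> groupnorm 2 q (repr_mat U) = 1) /\
  (* (3b) p > 2, q = oo *)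
  (forall p : R, 2 < p -> groupnorm p +oo%E (repr_mat U) = 1).
Proof.
move=> HU; have ne := paulis_nonempty n.
split; [|split; [|split]].
- move=> p q /andP[p0 p2] q0; have ge1 z := row_norm_ge1 HU z p0 (ltW p2).
  rewrite -(row_norms_eq1 HU p0 (negbT (lt_eqF p2))).
  case: q q0 => [q||] // q0; last exact: bigmax_ge1 (pauli_id n) ge1.
  by rewrite lte_fin in q0; rewrite groupnorm_finE; exact (power_mean_ge1 ne q0 ge1).
- move=> p q p2 q0; have p0 : 0 < p by apply: lt_trans p2.
  rewrite groupnorm_finE -(row_norms_eq1 HU p0 (negbT (gt_eqF p2))).
  exact (power_mean_le1 ne q0 (fun z => row_norm_le1 HU z p0 (ltW p2))).
- have ge1 z : 1 <= row_norm U 2 z by rewrite row_norm2.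
  case=> [q||] // q0; last exact/(bigmax_ge1 (pauli_id n) ge1).2/row_norm2.
  rewrite lte_fin in q0; rewrite groupnorm_finE.
  exact/(power_mean_ge1 ne q0 ge1).2/row_norm2.
- move=> p p2; have p0 : 0 < p by apply: lt_trans p2.
  rewrite groupnorm_inftyE; apply: (bigmax_attained1 (i0 := pauli_id n)).
    by move=> z; case/andP: (row_norm_le1 HU z p0 (ltW p2)).
  exact (row_norm_id HU p0 (negbT (gt_eqF p2))).
Qed.
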